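(* Let $K>0$, $S=1/K$, let $\eta:(0,K]\to[0,\infty)$ with $\eta(K)=0$, set $\phi(k)=k\eta(k)$ ($\phi(0)=0$) and $\theta(s)=\eta(1/s)$ for $s\ge S$, and let $\Psi:\mathbb{R}^3\to\mathbb{R}$ be arbitrary. Let $\Delta t,\Delta N>0$ satisfy $$\frac{\Delta N}{\Delta t}\ge\sup_{k\in[0,K)}\frac{\phi(k)}{1-k/K}.$$ Consider vehicles $N$ with leaders $N-\Delta N$, where the first (lead) vehicle follows a prescribed trajectory that is non-decreasing in time, and every other vehicle has arbitrary initial speed and is updated by $$X_t(t+\Delta t,N)=\max\Big\{0,\ \min\Big\{\theta\Big(\tfrac{X(t,N-\Delta N)-X(t,N)}{\Delta N}\Big),\ X_t(t,N)+\Delta t\,A(t,N)\Big\}\Big\},$$ $$X(t+\Delta t,N)=\max\Big\{X(t,N),\ \min\Big\{X(t,N)+\Delta t\,\theta\Big(\tfrac{X(t,N-\Delta N)-X(t,N)}{\Delta N}\Big),\ X(t,N)+\Delta t\,X_t(t,N)+\Delta t^2A(t,N)\Big\}\Big\},$$ with $$A(t,N)=\Psi\Big(X_t(t,N),\ \tfrac{X(t,N-\Delta N)-X(t,N)}{\Delta N},\ \tfrac{X_t(t,N)-X_t(t,N-\Delta N)}{\Delta N}\Big).$$ If initially all spacings satisfy $X(0,N-\Delta N)-X(0,N)\ge S\Delta N$, then the model is forward-traveling and collision-free: for all time steps, $X_t(t+\Delta t,N)\ge 0$ and $X(t,N-\Delta N)-X(t,N)\ge S\Delta N$ for every following vehicle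 $N$.
   Context: This is the car-following form of a general second-order traffic model $v_t+vv_x=\Psi(v,1/k,v_x/k)$ after a correction that caps the acceleration. $X(t,N)$ is the location and $X_t(t,N)$ the speed at time $t$ of vehicle $N$; $\eta$ is the speed-density relation, $\phi$ the flow-density relation, $\theta$ the speed-spacing relation, $K$ the jam density, $S$ the jam spacing. Forward-traveling means speeds are never negative; collision-free means spacings never fall below $S\Delta N$. *)

From Stdlib Require Import Reals.
Open Scope R_scope.

(* Speed-spacing relation theta(s) = eta(1/s) (meaningful for s >= S = 1/K). *)
Definition theta (eta : R -> R) (s : R) : R := eta (/ s).

Definition phi (eta : R -> R) (k : R) : R := k * eta k.

(* Trajectories: X n i = position, V n i = speed of vehicle i at time n*dt.
   Vehicle 0 is the lead vehicle; vehicle i+1 has leader i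
   (labels N = N0 - i*dN). *)

Definition accel (Psi : R -> R -> R -> R) (dN : R)
  (X V : nat -> nat -> R) (n i : nat) : R :=
  Psi (V n (S i)) ((X n i - X n (S i)) / dN) ((V n (S i) - V n i) / dN).

Definition speed_update (eta : R -> R) (Psi : R -> R -> R -> R) (dt dN : R)
  (X V : nat -> nat -> R) (n i : nat) : R :=
  Rmax 0 (Rmin (theta eta ((X n i - X n (S i)) / dN))
               (V n (S i) + dt * accel Psi dN X V n i)).

Definition pos_update (eta : R -> R) (Psi : R -> R -> R -> R) (dt dN : R)
  (X V : nat -> nat -> R) (n i : nat) : R :=
  Rmax (X n (S i))
       (Rmin (X n (S i) + dt * theta eta ((X n i - X n (S i)) / dN))
             (X n (S i) + dt * V n (S i) + dt ^ 2 * accel Psi dN X V n i)).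

From Stdlib Require Import Reals Lra.
Open Scope R_scope.

(* Positions never decrease, so between two steps a spacing s * dN can only
   shrink by the follower's advance, which the update caps at dt * theta(s).
   Reading the CFL condition at the density k = 1/s gives exactly
   dt * theta(s) <= dN * (s - S), so spacings stay above S * dN; speeds are
   nonnegative because the speed update is clipped at 0. *)

Section Fundamental_diagram.

Variables (K : R) (eta : R -> R) (dt dN : R).
Hypothesis hK : 0 < K.
Hypothesis heta_nonneg : forall k, 0 < k <= K -> 0 <= eta k.
Hypothesis heta_K : eta K = 0.
Hypothesis hdt : 0 < dt.
Hypothesis hdN : 0 < dN.
Hypothesis hcfl : forall k, 0 <= k < K -> phi eta k / (1 - k / K) <= dN / dt.

Lemma cfl_flow_bound (k : R) : 0 < k <= K -> dt * phi eta k <= dN * (1 - k / K).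
Proof.
  intros hk. unfold phi.
  destruct (Req_dec k K) as [-> | hkK].
  - rewrite heta_K. replace (1 - K / K) with 0 by (field; lra). lra.
  - assert (hlt : k < K) by (destruct hk as [_ [hlt | heq]]; [exact hlt | contradiction]).
    assert (hc : 0 < 1 - k / K).
    { replace (1 - k / K) with ((K - k) / K) by (field; lra).
      apply Rdiv_lt_0_compat; lra. }
    assert (hphi := hcfl k (conj (Rlt_le _ _ (proj1 hk)) hlt)).
    unfold phi in hphi.
    apply (Rmult_le_compat_r (dt * (1 - k / K))) in hphi; [| nra].
    replace (k * eta k / (1 - k / K) * (dt * (1 - k / K)))
      with (dt * (k * eta k)) in hphi by (field; lra).
    replace (dN / dt * (dt * (1 - k / K)))
      with (dN * (1 - k / K)) in hphi by (field; lra).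
    exact hphi.
Qed.

Lemma theta_nonneg (s : R) : / K <= s -> 0 <= theta eta s.
Proof.
  intros hs. unfold theta.
  assert (hKinv : 0 < / K) by (apply Rinv_0_lt_compat; lra).
  apply heta_nonneg. split.
  - apply Rinv_0_lt_compat; lra.
  - rewrite <- (Rinv_inv K). apply Rinv_le_contravar; lra.
Qed.

Lemma theta_spacing_bound (a : R) :
  / K * dN <= a -> dt * theta eta (a / dN) <= a - / K * dN.
Proof.
  intros ha.
  assert (hKinv : 0 < / K) by (apply Rinv_0_lt_compat; lra).
  assert (hapos : 0 < a) by nra.
  unfold theta.
  replace (/ (a / dN)) with (dN / a) by (field; lra).
  assert (hk : 0 < dN / a <= K).
  { split; [apply Rdiv_lt_0_compat; lra |].
    apply (Rmult_le_reg_r a); [lra |].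
    replace (dN / a * a) with dN by (field; lra).
    replace dN with (K * (/ K * dN)) at 1 by (field; lra).
    apply Rmult_le_compat_l; lra. }
  assert (hflow := cfl_flow_bound (dN / a) hk). unfold phi in hflow.
  apply (Rmult_le_compat_r (a / dN)) in hflow;
    [| apply Rlt_le, Rdiv_lt_0_compat; lra].
  replace (dt * (dN / a * eta (dN / a)) * (a / dN))
    with (dt * eta (dN / a)) in hflow by (field; lra).
  replace (dN * (1 - dN / a / K) * (a / dN))
    with (a - / K * dN) in hflow by (field; lra).
  exact hflow.
Qed.

End Fundamental_diagram.

Lemma Rmax_min_shift_le (x d y : R) : 0 <= d -> Rmax x (Rmin (x + d) y) <= x + d.
Proof.
  intros hd. apply Rmax_lub; [lra | apply Rmin_l].
Qed.

Theorem theorem6p1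
  (K : R) (eta : R -> R) (Psi : R -> R -> R -> R) (dt dN : R)
  (X V : nat -> nat -> R)
  (hK : 0 < K)
  (heta_nonneg : forall k, 0 < k <= K -> 0 <= eta k)
  (heta_K : eta K = 0)
  (hdt : 0 < dt) (hdN : 0 < dN)
  (* dN/dt >= sup_{k in [0,K)} phi(k)/(1-k/K); phi(0)=0*eta 0=0 *)
  (hcfl : forall k, 0 <= k < K ->
            phi eta k / (1 - k / K) <= dN / dt)
  (* lead vehicle: prescribed trajectory, non-decreasing in time *)
  (hlead : forall n, X n 0%nat <= X (S n) 0%nat)
  (* followers: update rules *)
  (hV : forall n i, V (S n) (S i) = speed_update eta Psi dt dN X V n i)
  (hX : forall n i, X (S n) (S i) = pos_update eta Psi dt dN X V n i)
  (* initial spacings *)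
  (hinit : forall i, X 0%nat i - X 0%nat (S i) >= (/ K) * dN) :
  forall n i,
    0 <= V (S n) (S i) /\ X n i - X n (S i) >= (/ K) * dN.
Proof.
  assert (hforward : forall n i, X n i <= X (S n) i).
  { intros n [| i]; [apply hlead |]. rewrite hX. apply Rmax_l. }
  assert (hspacing : forall n i, X n i - X n (S i) >= / K * dN).
  { induction n as [| n IH]; intros i; [apply hinit |].
    set (a := X n i - X n (S i)).
    assert (hbound := theta_spacing_bound K eta dt dN hK heta_K
                        hdt hdN hcfl a (Rge_le _ _ (IH i))).
    assert (hs : / K <= a / dN).
    { apply (Rmult_le_reg_r dN); [lra |].
      replace (a / dN * dN) with a by (field; lra). apply Rge_le, IH. }
    assert (hadvance : X (S n) (S i) <= X n (S i) + dt * theta eta (a / dN)).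
    { rewrite hX. apply Rmax_min_shift_le, Rmult_le_pos; [lra |].
      exact (theta_nonneg K eta hK heta_nonneg _ hs). }
    specialize (hforward n i). unfold a in *. lra. }
  intros n i. split; [rewrite hV; apply Rmax_l | apply hspacing].
Qed.
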